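(* Let $n\ge3$ and $\mathbf{q}\in(\Bbbk^\times)^n$; indices are modulo $n$. (1) Let $\alpha_0,\dots,\alpha_{n-1}\in\Bbbk^\times$ and set $p_i=\frac{\alpha_{i-1}}{\alpha_i}q_i$ for $0\le i<n$. The linear map $\phi_\alpha:A_n(\mathbf{q})\to A_n(\mathbf{p})$ with $\phi_\alpha(e_i)=e_i$, $\phi_\alpha(a_i)=\alpha_ia_i$, $\phi_\alpha(a_i^* )=a_i^*$ extends to an isomorphism. (2) Set $p_i=q_{i-1}$ for $0\le i<n$. The linear map $\psi:A_n(\mathbf{q})\to A_n(\mathbf{p})$ with $\psi(e_i)=e_{i+1}$, $\psi(a_i)=a_{i+1}$, $\psi(a_i^* )=a_{i+1}^*$ extends to an isomorphism. (3) Set $p_i=q_{n-i}^{-1}$ for $0\le i<n$. The linear map $\pi:A_n(\mathbf{q})\to A_n(\mathbf{p})$ with $\pi(e_i)=e_{n-i}$, $\pi(a_i)=a_{n-i-1}^*$, $\pi(a_i^* )=a_{n-i-1}$ extends to an isomorphism.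
   Context: $\Bbbk$ is an algebraically closed field of characteristic zero. Paths are written left to right. $A_n(\mathbf{q})=\Bbbk Q/(a_ia_i^*-q_ia_{i-1}^*a_{i-1},\ i=0,\dots,n-1)$, where $Q$ has vertices $e_0,\dots,e_{n-1}$ and arrows $a_i:e_i\to e_{i+1}$, $a_i^*:e_{i+1}\to e_i$, indices modulo $n$. *)

(* Concrete model of the path algebra kQ of the cyclic
   double quiver Q on vertices 'I_n and of the quotient A_n(q) = kQ / I_q. *)
From HB Require Import structures.
From mathcomp Require Import all_boot all_order all_algebra.
Set Implicit Arguments. Unset Strict Implicit. Unset Printing Implicit Defensive.
Import Order.TTheory GRing.Theory Num.Theory.
Local Open Scope ring_scope.

Section PathAlgebra.
Variables (k : fieldType) (n : nat).

(* Arrows: (i, false) is a_i : e_i -> e_{i+1};  (i, true) is a_i^* : e_{i+1} -> e_i. *)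
Definition arr := ('I_n * bool)%type.
Definition src (a : arr) : 'I_n := if a.2 then ordS a.1 else a.1.
Definition tgt (a : arr) : 'I_n := if a.2 then a.1 else ordS a.1.

(* A (candidate) path: a starting vertex and a list of arrows, read left to
   right.  It is a genuine path of Q when the arrows are composable. *)
Definition qpath := ('I_n * seq arr)%type.
Fixpoint validf (v : 'I_n) (s : seq arr) : bool :=
  if s is a :: s' then (src a == v) && validf (tgt a) s' else true.
Definition valid (p : qpath) : bool := validf p.1 p.2.
Definition endpt (p : qpath) : 'I_n := last p.1 (map tgt p.2).

(* Elements of kQ as formal finite linear combinations of paths. *)
Definition pa := seq (k * qpath)%type.
(* coefficient of a genuine path; non-paths count as 0 *)
Definition pcoef (x : pa) (p : qpath) : k :=
  if valid p then \sum_(t <- x | t.2 == p) t.1 else 0.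
Definition paeq (x y : pa) : Prop := forall p, pcoef x p = pcoef y p.

Definition padd (x y : pa) : pa := x ++ y.
Definition pscale (c : k) (x : pa) : pa := [seq (c * t.1, t.2) | t <- x].
Definition psum (xs : seq pa) : pa := foldr padd [::] xs.
Definition pmul (x y : pa) : pa :=
  flatten [seq [seq (t.1 * u.1, (t.2.1, t.2.2 ++ u.2.2))
               | u <- y & endpt t.2 == u.2.1] | t <- x].
Definition pel (p : qpath) : pa := [:: (1, p)].
Definition vtx (i : 'I_n) : pa := pel (i, [::]).
Definition arrw (a : arr) : pa := pel (src a, [:: a]).
Definition a_ (i : 'I_n) : pa := arrw (i, false).
Definition as_ (i : 'I_n) : pa := arrw (i, true).
Definition pone : pa := psum [seq vtx i | i <- enum 'I_n].

Definition qrel (q : 'I_n -> k) (i : 'I_n) : pa :=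
  padd (pmul (a_ i) (as_ i))
       (pscale (- q i) (pmul (as_ (ord_pred i)) (a_ (ord_pred i)))).

(* the two-sided ideal I_q generated by the relations *)
Definition inI (q : 'I_n -> k) (x : pa) : Prop :=
  exists s : seq (k * qpath * 'I_n * qpath),
    paeq x (psum [seq pscale t.1.1.1 (pmul (pmul (pel t.1.1.2) (qrel q t.1.2)) (pel t.2))
                 | t <- s]).

Definition eqA (q : 'I_n -> k) (x y : pa) : Prop := inI q (padd x (pscale (-1) y)).

(* The unique algebra map kQ -> kQ determined by images of vertices and arrows
   (path e_v a_1 ... a_m  |->  fe v * fa a_1 * ... * fa a_m), extended linearly. *)
Definition pimg (fe : 'I_n -> pa) (fa : arr -> pa) (p : qpath) : pa :=
  foldl pmul (fe p.1) (map fa p.2).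
Definition plift (fe : 'I_n -> pa) (fa : arr -> pa) (x : pa) : pa :=
  psum [seq pscale t.1 (pimg fe fa t.2) | t <- x].

Definition induces_iso (q p : 'I_n -> k) (f : pa -> pa) : Prop :=
  (forall x, inI q x -> inI p (f x))
  /\ (forall x y, eqA p (f (padd x y)) (padd (f x) (f y)))
  /\ (forall c x, eqA p (f (pscale c x)) (pscale c (f x)))
  /\ (forall x y, eqA p (f (pmul x y)) (pmul (f x) (f y)))
  /\ eqA p (f pone) pone
  /\ (forall x, inI p (f x) -> inI q x)
  /\ (forall y, exists x, eqA p (f x) y).

End PathAlgebra.

From HB Require Import structures.
From mathcomp Require Import all_boot all_order all_algebra.
From mathcomp Require Import ring zify.
Import GRing.Theory.
Local Open Scope ring_scope.
Set Implicit Arguments. Unset Strict Implicit.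

(* Each of the three maps is induced by a quiver automorphism (sg on vertices,
   tau on arrows, compatible with sources and targets) twisted by nonzero
   arrow weights c: it sends a path to the product of the weights times the
   image path, so it is a unital algebra endomorphism of kQ.  It sends the
   i-th defining relation for q to a multiple of a defining relation for p,
   hence maps I_q into I_p; the map built from sg^-1, tau^-1 and 1/c does the
   converse, and both composites are the identity of kQ.
   Elements of kQ are compared through the pairings
   [peval g x = sum of coefficient * g path] with functions g vanishing off
   genuine paths. *)

Section Pairing.
Variables (k : fieldType) (n : nat).
Local Notation pa := (pa k n).
Local Notation qpath := (qpath n).

Definition peval (g : qpath -> k) (x : pa) : k := \sum_(t <- x) t.1 * g t.2.

Definition supported_on_paths (g : qpath -> k) := forall w, ~~ valid w -> g w = 0.

(* Unlike [paeq], this also compares the coefficients of non-composable arrow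
   sequences. *)
Definition feq (x y : pa) := forall g, peval g x = peval g y.

Lemma eq_peval g g' x : g =1 g' -> peval g x = peval g' x.
Proof. by move=> eq_g; apply: eq_bigr => t _; rewrite eq_g. Qed.

Lemma peval_padd g x y : peval g (padd x y) = peval g x + peval g y.
Proof. exact: big_cat. Qed.

Lemma peval_pscale g c x : peval g (pscale c x) = c * peval g x.
Proof.
by rewrite /peval big_map mulr_sumr; apply: eq_bigr => t _; rewrite mulrA.
Qed.

Lemma peval_psum g xs : peval g (psum xs) = \sum_(x <- xs) peval g x.
Proof.
elim: xs => [|x xs IH]; first by rewrite big_nil /peval big_nil.
by rewrite big_cons /= peval_padd IH.
Qed.

Lemma peval_pel g w : peval g (pel k w) = g w.
Proof. by rewrite /peval big_seq1 mul1r. Qed.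

Lemma peval_pmul g x y : peval g (pmul x y) =
  peval (fun w => peval (fun u => (endpt w == u.1)%:R * g (w.1, w.2 ++ u.2)) y) x.
Proof.
rewrite /peval big_flatten /= big_map; apply: eq_bigr => t _.
rewrite big_map big_filter big_mkcond mulr_sumr; apply: eq_bigr => u _ /=.
by case: (endpt t.2 == u.2.1); rewrite /= ?mul1r ?mul0r ?mulr0 ?mulrA.
Qed.

Lemma peval_pmul_r g x y : peval g (pmul x y) =
  peval (fun u => peval (fun w => (endpt w == u.1)%:R * g (w.1, w.2 ++ u.2)) x) y.
Proof.
rewrite peval_pmul /peval; under eq_bigr do rewrite mulr_sumr.
rewrite exchange_big; apply: eq_bigr => u _; rewrite mulr_sumr.
by apply: eq_bigr => t _; rewrite !mulrA [t.1 * u.1]mulrC.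
Qed.

Lemma peval_plift g fe fa x :
  peval g (plift fe fa x) = peval (fun w => peval g (pimg fe fa w)) x.
Proof.
by rewrite /plift peval_psum big_map; apply: eq_bigr => t _; rewrite peval_pscale.
Qed.

Lemma peval_qrel g q (i : 'I_n) : peval g (qrel q i) =
  g (i, [:: (i, false); (i, true)]) -
  q i * g (i, [:: (ord_pred i, true); (ord_pred i, false)]).
Proof.
rewrite peval_padd peval_pscale !peval_pmul /a_ /as_ /arrw /peval /pel !big_seq1 /=.
by rewrite /endpt /src /tgt /= ord_predK !eqxx !mul1r mulNr.
Qed.

Lemma pcoef_peval x w : pcoef x w = peval (fun u => (valid w && (u == w))%:R) x.
Proof.
rewrite /pcoef /peval; case: (valid w) => /=; last first.
  by rewrite big1 // => t _; rewrite mulr0.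
by rewrite big_mkcond; apply: eq_bigr => t _; case: (t.2 == w); rewrite ?mulr1 ?mulr0.
Qed.

Lemma peval_coef (W : seq qpath) g x : uniq W -> {subset map snd x <= W} ->
  supported_on_paths g -> peval g x = \sum_(w <- W) pcoef x w * g w.
Proof.
move=> uniqW sub_xW supp_g.
have -> : peval g x = \sum_(t <- x) \sum_(w <- W) (t.2 == w)%:R * (t.1 * g w).
  apply: eq_big_seq => t tx; rewrite (bigD1_seq t.2) ?sub_xW ?map_f //= eqxx mul1r.
  by rewrite big1 ?addr0 // => w; rewrite eq_sym => /negbTE ->; rewrite mul0r.
rewrite exchange_big; apply: eq_bigr => w _; rewrite /pcoef.
case valid_w: (valid w); last by rewrite supp_g ?valid_w // mulr0 big1 // => t; rewrite !mulr0.
rewrite mulr_suml [RHS]big_mkcond; apply: eq_bigr => t _.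
by case: (t.2 == w); rewrite /= ?mul1r ?mul0r.
Qed.

Lemma paeqP x y :
  paeq x y <-> forall g, supported_on_paths g -> peval g x = peval g y.
Proof.
split=> [eq_xy g supp_g | eq_xy w].
  pose W := undup (map snd (x ++ y)).
  have uniqW : uniq W := undup_uniq _.
  rewrite (@peval_coef W g x) ?(@peval_coef W g y) //.
  - by apply: eq_bigr => w _; rewrite eq_xy.
  - by move=> w wy; rewrite mem_undup map_cat mem_cat wy orbT.
  - by move=> w wx; rewrite mem_undup map_cat mem_cat wx.
rewrite !pcoef_peval; apply: eq_xy => u /negbTE invalid_u.
by case: eqP => [<-|]; rewrite ?invalid_u ?andbF.
Qed.

Lemma feq_paeq x y : feq x y -> paeq x y.
Proof. by move=> eq_xy; apply/paeqP => g _. Qed.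

Lemma feq_pmul x x' y y' : feq x x' -> feq y y' -> feq (pmul x y) (pmul x' y').
Proof.
by move=> eq_x eq_y g; rewrite !peval_pmul eq_x; apply: eq_peval => w; apply: eq_y.
Qed.

Lemma pmul_pscalel c x y : feq (pmul (pscale c x) y) (pscale c (pmul x y)).
Proof. by move=> g; rewrite !peval_pmul !peval_pscale peval_pmul. Qed.

Lemma pmul_pscaler c x y : feq (pmul x (pscale c y)) (pscale c (pmul x y)).
Proof. by move=> g; rewrite !peval_pmul_r !peval_pscale peval_pmul_r. Qed.

Lemma feq_foldl_pmul x x' ys :
  feq x x' -> feq (foldl (@pmul k n) x ys) (foldl (@pmul k n) x' ys).
Proof. by elim: ys x x' => [|y ys IH] x x' eq_x //=; apply/IH/feq_pmul. Qed.

Lemma validf_cat (v : 'I_n) s1 s2 :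
  validf v (s1 ++ s2) = validf v s1 && validf (last v (map (@tgt n) s1)) s2.
Proof. by elim: s1 v => [|a s1 IH] v //=; rewrite IH andbA. Qed.

Definition ideal_generator (q : 'I_n -> k) (t : k * qpath * 'I_n * qpath) : pa :=
  pscale t.1.1.1 (pmul (pmul (pel k t.1.1.2) (qrel q t.1.2)) (pel k t.2)).

Lemma eqA_paeq (q : 'I_n -> k) x y : paeq x y -> eqA q x y.
Proof.
move=> /paeqP eq_xy; exists [::]; apply/paeqP => g supp_g.
by rewrite peval_padd peval_pscale eq_xy // /peval big_nil; ring.
Qed.

Lemma inI_paeq (q : 'I_n -> k) x y : paeq x y -> inI q x -> inI q y.
Proof.
move=> /paeqP eq_xy [s /paeqP eq_x]; exists s; apply/paeqP => g supp_g.
by rewrite -eq_xy // eq_x.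
Qed.

End Pairing.

Section QuiverMap.
Variables (k : fieldType) (n : nat).
Local Notation pa := (pa k n).
Local Notation arr := (arr n).
Variables (sg : 'I_n -> 'I_n) (tau : arr -> arr) (c : arr -> k) (fa : arr -> pa).
Hypotheses (sg_inj : injective sg)
  (src_tau : forall a, src (tau a) = sg (src a))
  (tgt_tau : forall a, tgt (tau a) = sg (tgt a))
  (faE : forall a, feq (fa a) (pscale (c a) (arrw k (tau a)))).

Definition pweight (s : seq arr) : k := \prod_(a <- s) c a.

Local Notation fe := (fun v => vtx k (sg v)).
Local Notation f := (plift fe fa).

Lemma peval_extend_path s : forall v x c0 w0 s0 g,
  feq x (pscale c0 (pel k (w0, s0))) -> endpt (w0, s0) = sg v ->
  peval g (foldl (@pmul k n) x (map fa s)) =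
  (validf v s)%:R * (c0 * pweight s) * g (w0, s0 ++ map tau s).
Proof.
elim: s => [|a s IH] v x c0 w0 s0 g eq_x end_s0 /=.
  by rewrite eq_x peval_pscale peval_pel /pweight big_nil cats0 !mulr1 mul1r.
have eq_xa : feq (pmul x (fa a))
    (pscale ((src a == v)%:R * (c0 * c a)) (pel k (w0, rcons s0 (tau a)))).
  move=> g'; rewrite (feq_pmul eq_x (faE a)) pmul_pscalel peval_pscale.
  rewrite pmul_pscaler !peval_pscale peval_pmul !peval_pel /= end_s0 src_tau.
  by rewrite (inj_eq sg_inj) -cats1 eq_sym; ring.
rewrite (IH (tgt a) _ _ _ _ _ eq_xa); last first.
  by rewrite /endpt /= map_rcons last_rcons tgt_tau.
by rewrite cat_rcons /pweight big_cons -mulnb natrM; ring.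
Qed.

Lemma peval_pimg v s g : peval g (pimg fe fa (v, s)) =
  (validf v s)%:R * pweight s * g (sg v, map tau s).
Proof.
have vtxE : feq (vtx k (sg v)) (pscale 1 (pel k (sg v, [::]))).
  by move=> g'; rewrite peval_pscale mul1r.
by rewrite /pimg (peval_extend_path (v := v) _ _ vtxE) // mul1r.
Qed.

Lemma endpt_img v s : endpt (sg v, map tau s) = sg (endpt (v, s)).
Proof. by rewrite /endpt /= -map_comp (eq_map tgt_tau) map_comp last_map. Qed.

Lemma validf_img v s : validf (sg v) (map tau s) = validf v s.
Proof.
by elim: s v => [|a s IH] v //=; rewrite src_tau (inj_eq sg_inj) tgt_tau IH.
Qed.

Lemma peval_pimg_mul t u g :
  peval g (pmul (pimg fe fa t) (pimg fe fa u)) =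
  (endpt t == u.1)%:R * peval g (pimg fe fa (t.1, t.2 ++ u.2)).
Proof.
case: t u => v s [w r] /=; rewrite peval_pmul !peval_pimg /= endpt_img.
rewrite (inj_eq sg_inj) validf_cat map_cat /pweight big_cat /= -/(endpt (v, s)).
case: eqP => [->|_]; last by rewrite !(mul0r, mulr0).
by case: (validf v s); case: (validf _ r); rewrite /=; ring.
Qed.

Lemma plift_padd x y : feq (f (padd x y)) (padd (f x) (f y)).
Proof. by move=> g; rewrite !(peval_plift, peval_padd). Qed.

Lemma plift_pscale a x : feq (f (pscale a x)) (pscale a (f x)).
Proof. by move=> g; rewrite !(peval_plift, peval_pscale). Qed.

Lemma plift_pmul x y : feq (f (pmul x y)) (pmul (f x) (f y)).
Proof.
move=> g; rewrite peval_plift peval_pmul [RHS]peval_pmul peval_plift.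
apply: eq_peval => t.
transitivity (peval g (pmul (pimg fe fa t) (f y))); last by rewrite peval_pmul.
rewrite peval_pmul_r peval_plift; apply: eq_peval => u.
by rewrite -peval_pmul_r peval_pimg_mul.
Qed.

Lemma plift_pone : feq (f (pone k n)) (pone k n).
Proof.
move=> g; rewrite peval_plift /pone !peval_psum !big_map -!enumT !big_enum /=.
rewrite [RHS](reindex_inj sg_inj); apply: eq_bigr => i _.
by rewrite !peval_pel.
Qed.

Lemma plift_paeq x y : paeq x y -> paeq (f x) (f y).
Proof.
move=> /paeqP eq_xy; apply/paeqP => g supp_g; rewrite !peval_plift.
apply: eq_xy => -[v s] /negbTE invalid.
by rewrite peval_pimg (invalid : validf v s = false) !mul0r.
Qed.

Lemma plift_pel w : feq (f (pel k w))
  (pscale ((valid w)%:R * pweight w.2) (pel k (sg w.1, map tau w.2))).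
Proof.
case: w => v s g; rewrite peval_plift peval_pel peval_pscale peval_pel.
exact: peval_pimg.
Qed.

Lemma peval_plift_qrel q i g : peval g (f (qrel q i)) =
  c (i, false) * c (i, true) * g (sg i, [:: tau (i, false); tau (i, true)]) -
  q i * (c (ord_pred i, true) * c (ord_pred i, false) *
         g (sg i, [:: tau (ord_pred i, true); tau (ord_pred i, false)])).
Proof.
rewrite peval_plift peval_qrel !peval_pimg /pweight !big_cons !big_nil /=.
by rewrite /src /tgt /= ord_predK !eqxx !mul1r !mulr1.
Qed.

Variables (q p d : 'I_n -> k) (j : 'I_n -> 'I_n).
Hypothesis plift_qrel : forall i, feq (f (qrel q i)) (pscale (d i) (qrel p (j i))).

Definition ideal_generator_img (t : k * qpath n * 'I_n * qpath n) :=
  let: (a, u, i, w) := t in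
  (a * ((valid u)%:R * pweight u.2) * d i * ((valid w)%:R * pweight w.2),
   (sg u.1, map tau u.2), j i, (sg w.1, map tau w.2)).

Lemma plift_ideal_generator t : feq (f (ideal_generator q t))
  (ideal_generator p (ideal_generator_img t)).
Proof.
case: t => [[[a u] i] w] g; rewrite /ideal_generator /=.
rewrite plift_pscale !peval_pscale plift_pmul.
rewrite (feq_pmul (plift_pmul _ _) (plift_pel w)).
rewrite (feq_pmul (feq_pmul (plift_pel u) (plift_qrel i)) (fun _ => erefl)).
rewrite pmul_pscaler peval_pscale (feq_pmul (pmul_pscalel _ _ _) (fun _ => erefl)).
rewrite pmul_pscalel peval_pscale.
rewrite (feq_pmul (pmul_pscaler _ _ _) (fun _ => erefl)) pmul_pscalel peval_pscale.
ring.
Qed.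

Lemma plift_inI x : inI q x -> inI p (f x).
Proof.
case=> s /plift_paeq /paeqP eq_x; exists (map ideal_generator_img s).
apply/paeqP => g supp_g; rewrite eq_x // peval_plift !peval_psum !big_map.
by apply: eq_bigr => t _; rewrite -peval_plift plift_ideal_generator.
Qed.

End QuiverMap.

Section Inverse.
Variables (k : fieldType) (n : nat).
Local Notation pa := (pa k n).
Local Notation arr := (arr n).
Variables (sg1 sg2 : 'I_n -> 'I_n) (tau1 tau2 : arr -> arr) (c1 c2 : arr -> k)
  (fa1 fa2 : arr -> pa).
Hypotheses (sg1_inj : injective sg1) (sg2_inj : injective sg2)
  (src_tau1 : forall a, src (tau1 a) = sg1 (src a))
  (tgt_tau1 : forall a, tgt (tau1 a) = sg1 (tgt a))
  (src_tau2 : forall a, src (tau2 a) = sg2 (src a))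
  (tgt_tau2 : forall a, tgt (tau2 a) = sg2 (tgt a))
  (fa1E : forall a, feq (fa1 a) (pscale (c1 a) (arrw k (tau1 a))))
  (fa2E : forall a, feq (fa2 a) (pscale (c2 a) (arrw k (tau2 a))))
  (sgK : cancel sg1 sg2) (tauK : cancel tau1 tau2)
  (cK : forall a, c1 a * c2 (tau1 a) = 1).

Lemma plift_cancel x :
  paeq (plift (fun v => vtx k (sg2 v)) fa2 (plift (fun v => vtx k (sg1 v)) fa1 x)) x.
Proof.
apply/paeqP => g supp_g; rewrite !peval_plift; apply: eq_peval => -[v s].
rewrite (peval_pimg sg1_inj src_tau1 tgt_tau1 fa1E).
rewrite (peval_pimg sg2_inj src_tau2 tgt_tau2 fa2E) /=.
rewrite (validf_img sg1_inj src_tau1 tgt_tau1) sgK -map_comp (eq_map tauK) map_id.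
have weightK : pweight c1 s * pweight c2 (map tau1 s) = 1.
  by rewrite /pweight big_map -big_split big1 // => a _; exact: cK.
case valid_s: (validf v s); last by rewrite supp_g ?mulr0 // /valid valid_s.
by rewrite !mul1r mulrA weightK mul1r.
Qed.

End Inverse.

Section Isomorphism.
Variables (k : fieldType) (n : nat).
Local Notation pa := (pa k n).
Local Notation arr := (arr n).
Variables (q p : 'I_n -> k) (sg sg' : 'I_n -> 'I_n) (tau tau' : arr -> arr)
  (c c' : arr -> k) (fa : arr -> pa) (d d' : 'I_n -> k) (j j' : 'I_n -> 'I_n).
Hypotheses (sgK : cancel sg sg') (sgK' : cancel sg' sg)
  (tauK : cancel tau tau') (tauK' : cancel tau' tau)
  (src_tau : forall a, src (tau a) = sg (src a))
  (tgt_tau : forall a, tgt (tau a) = sg (tgt a))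
  (cK : forall a, c a * c' (tau a) = 1)
  (faE : forall a, feq (fa a) (pscale (c a) (arrw k (tau a)))).

Let fa' a := pscale (c' a) (arrw k (tau' a)).
Local Notation f := (plift (fun v => vtx k (sg v)) fa).
Local Notation f' := (plift (fun v => vtx k (sg' v)) fa').

Hypotheses (plift_qrel : forall i, feq (f (qrel q i)) (pscale (d i) (qrel p (j i))))
  (plift_qrel' : forall i, feq (f' (qrel p i)) (pscale (d' i) (qrel q (j' i)))).

Theorem plift_induces_iso : induces_iso q p f.
Proof.
have sg_inj : injective sg := can_inj sgK.
have sg'_inj : injective sg' := can_inj sgK'.
have src_tau' a : src (tau' a) = sg' (src a) by rewrite -{2}[a]tauK' src_tau sgK.
have tgt_tau' a : tgt (tau' a) = sg' (tgt a) by rewrite -{2}[a]tauK' tgt_tau sgK.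
have cK' a : c' a * c (tau' a) = 1 by rewrite -{1}[a]tauK' mulrC cK.
have fa'E a : feq (fa' a) (pscale (c' a) (arrw k (tau' a))) by [].
have f'K x : paeq (f' (f x)) x.
  exact: (plift_cancel (tau1 := tau) (c1 := c) sg_inj sg'_inj
                       src_tau tgt_tau src_tau' tgt_tau' faE fa'E sgK tauK cK).
have fK x : paeq (f (f' x)) x.
  exact: (plift_cancel (tau1 := tau') (c1 := c') sg'_inj sg_inj
                       src_tau' tgt_tau' src_tau tgt_tau fa'E faE sgK' tauK' cK').
split; first exact: (plift_inI (c := c) sg_inj src_tau tgt_tau faE plift_qrel).
split; first by move=> x y; apply/eqA_paeq/feq_paeq/plift_padd.
split; first by move=> a x; apply/eqA_paeq/feq_paeq/plift_pscale.
split; first by move=> x y; apply/eqA_paeq/feq_paeq;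
  exact: (plift_pmul (c := c) sg_inj src_tau tgt_tau faE).
split; first exact/eqA_paeq/feq_paeq/(plift_pone fa sg_inj).
split.
  move=> x /(plift_inI (c := c') sg'_inj src_tau' tgt_tau' fa'E plift_qrel').
  exact: inI_paeq.
by move=> y; exists (f' y); apply/eqA_paeq.
Qed.

End Isomorphism.

Definition ord_neg n (i : 'I_n) : 'I_n := ordS (rev_ord i).

Lemma ord_negS n (i : 'I_n) : ord_neg (ordS i) = rev_ord i.
Proof.
apply: val_inj => /=; have lt_i_n := ltn_ord i.
case: (ltnP i.+1 n) => [lt_Si_n | le_n_Si].
  by rewrite (modn_small lt_Si_n) modn_small; lia.
have -> : i.+1 = n by lia.
by rewrite modnn (_ : (n - 1).+1 = n) ?modnn; lia.
Qed.

Lemma ord_negK n : involutive (@ord_neg n).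
Proof. by move=> i; rewrite {2}/ord_neg ord_negS rev_ordK. Qed.

Lemma rev_ord_pred n (i : 'I_n) : rev_ord (ord_pred i) = ord_neg i.
Proof. by rewrite -{2}(ord_predK i) ord_negS. Qed.

Section Automorphisms.
Variables (k : fieldType) (n : nat).
Local Notation arr := (arr n).

Lemma rescaling_induces_iso (q alpha : 'I_n -> k) :
  (forall i, alpha i != 0) ->
  induces_iso q (fun i => alpha (ord_pred i) / alpha i * q i)
    (plift (@vtx k n)
       (fun a : arr => if a.2 then as_ k a.1 else pscale (alpha a.1) (a_ k a.1))).
Proof.
move=> alpha_neq0; set fa := fun a : arr => _.
pose c (a : arr) := if a.2 then 1 else alpha a.1.
pose c' (a : arr) := if a.2 then 1 else (alpha a.1)^-1.
have faE a : feq (fa a) (pscale (c a) (arrw k a)).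
  by case: a => i [] g; rewrite peval_pscale /c /= ?mul1r.
have qrelE := peval_plift_qrel (sg := id) (tau := id) (@inj_id _)
  (fun _ => erefl) (fun _ => erefl) faE.
have qrelE' := peval_plift_qrel (sg := id) (tau := id) (c := c')
  (fa := fun a => pscale (c' a) (arrw k (id a))) (@inj_id _)
  (fun _ => erefl) (fun _ => erefl) (fun _ _ => erefl).
apply: (@plift_induces_iso k n q _ id id id id c c' fa alpha (fun i => (alpha i)^-1) id id)
  => // [a|i g|i g].
- by case: a => i []; rewrite /c /c' /= ?mulr1 ?divff.
- by rewrite qrelE peval_pscale peval_qrel /c /=; field.
- by rewrite qrelE' peval_pscale peval_qrel /c' /=; field; rewrite !alpha_neq0.
Qed.

Lemma rotation_induces_iso (q : 'I_n -> k) :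
  induces_iso q (fun i => q (ord_pred i))
    (plift (fun i => vtx k (ordS i)) (fun a : arr => arrw k (ordS a.1, a.2))).
Proof.
pose tau (a : arr) := (ordS a.1, a.2).
pose tau' (a : arr) := (ord_pred a.1, a.2).
have src_tau a : src (tau a) = ordS (src a) by case: a => i [].
have tgt_tau a : tgt (tau a) = ordS (tgt a) by case: a => i [].
have src_tau' a : src (tau' a) = ord_pred (src a).
  by case: a => i [] //=; rewrite /tau' /src /= ord_predK ordSK.
have tgt_tau' a : tgt (tau' a) = ord_pred (tgt a).
  by case: a => i [] //=; rewrite /tau' /tgt /= ord_predK ordSK.
have faE a : feq (arrw k (tau a)) (pscale 1 (arrw k (tau a))).
  by move=> g; rewrite peval_pscale mul1r.
have qrelE := peval_plift_qrel (can_inj (@ordSK n)) src_tau tgt_tau faE.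
have qrelE' := peval_plift_qrel (c := fun=> 1)
  (fa := fun a => pscale 1 (arrw k (tau' a))) (can_inj (@ord_predK n))
  src_tau' tgt_tau' (fun _ _ => erefl).
apply: (@plift_induces_iso k n q _ (@ordS n) (@ord_pred n) tau tau' (fun=> 1) (fun=> 1)
  _ (fun=> 1) (fun=> 1) (@ordS n) (@ord_pred n)) => // [||a|a|a|i g|i g].
- exact: ordSK.
- exact: ord_predK.
- by rewrite /tau /tau' /= ordSK; case: a.
- by rewrite /tau /tau' /= ord_predK; case: a.
- exact: mulr1.
- by rewrite qrelE peval_pscale peval_qrel /tau /= ord_predK ordSK; ring.
- by rewrite qrelE' peval_pscale peval_qrel /tau' /=; ring.
Qed.

Definition rev_arr (a : arr) : arr := (rev_ord a.1, ~~ a.2).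

Lemma rev_arrK : involutive rev_arr.
Proof. by case=> i b; rewrite /rev_arr rev_ordK negbK. Qed.

Lemma src_rev_arr a : src (rev_arr a) = ord_neg (src a).
Proof. by case: a => i []; rewrite /src //= ord_negS. Qed.

Lemma tgt_rev_arr a : tgt (rev_arr a) = ord_neg (tgt a).
Proof. by case: a => i []; rewrite /tgt //= ord_negS. Qed.

Lemma plift_rev_arr_qrel (q p : 'I_n -> k) (fa : arr -> pa k n) :
  (forall a, feq (fa a) (pscale 1 (arrw k (rev_arr a)))) ->
  (forall i, q i != 0) -> (forall i, p (ord_neg i) = (q i)^-1) ->
  forall i, feq (plift (fun v => vtx k (ord_neg v)) fa (qrel q i))
                (pscale (- q i) (qrel p (ord_neg i))).
Proof.
move=> faE q_neq0 pE i g.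
rewrite (peval_plift_qrel (can_inj (@ord_negK n)) src_rev_arr tgt_rev_arr faE).
rewrite peval_pscale peval_qrel /rev_arr /= rev_ord_pred.
by rewrite /ord_neg ordSK -/(ord_neg i) pE; field.
Qed.

Lemma reflection_induces_iso (q : 'I_n -> k) : (forall i, q i != 0) ->
  induces_iso q (fun i => (q (ordS (rev_ord i)))^-1)
    (plift (fun i => vtx k (ordS (rev_ord i)))
       (fun a : arr => arrw k (rev_ord a.1, ~~ a.2))).
Proof.
move=> q_neq0; set p := fun i => _.
have faE a : feq (arrw k (rev_arr a)) (pscale 1 (arrw k (rev_arr a))).
  by move=> g; rewrite peval_pscale mul1r.
apply: (@plift_induces_iso k n q p (@ord_neg n) (@ord_neg n) rev_arr rev_arr
  (fun=> 1) (fun=> 1) _ (fun i => - q i) (fun i => - p i) (@ord_neg n) (@ord_neg n))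
  => //.
- exact: ord_negK.
- exact: ord_negK.
- exact: rev_arrK.
- exact: rev_arrK.
- exact: src_rev_arr.
- exact: tgt_rev_arr.
- by move=> _; rewrite mulr1.
- by apply: plift_rev_arr_qrel => // i; rewrite /p -/(ord_neg (ord_neg i)) ord_negK.
- apply: plift_rev_arr_qrel => [a g|i|i]; first by [].
  + by rewrite invr_eq0.
  + by rewrite /p invrK.
Qed.

End Automorphisms.

Theorem lemma2p7 (k : closedFieldType) (hk : [pchar k] =i pred0)
    (n : nat) (hn : (3 <= n)%N) (q : 'I_n -> k) (hq : forall i, q i != 0) :
  (* (1) *)
  (forall alpha : 'I_n -> k, (forall i, alpha i != 0) ->
     induces_iso q (fun i => alpha (ord_pred i) / alpha i * q i)
       (plift (@vtx k n)
             (fun a : arr n => if a.2 then @as_ k n a.1 else pscale (alpha a.1) (@a_ k n a.1))))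
  /\
  (* (2) *)
  induces_iso q (fun i => q (ord_pred i))
    (plift (fun i => @vtx k n (ordS i)) (fun a : arr n => @arrw k n (ordS a.1, a.2)))
  /\
  (* (3) *)
  induces_iso q (fun i => (q (ordS (rev_ord i)))^-1)
    (plift (fun i => @vtx k n (ordS (rev_ord i)))
          (fun a : arr n => @arrw k n (rev_ord a.1, ~~ a.2))).
Proof.
split; first exact: rescaling_induces_iso.
split; [exact: rotation_induces_iso | exact: reflection_induces_iso].
Qed.
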